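(* Let $n,d,a$ be positive integers, $g:=\gcd(d,n)$, and assume $a\ge \frac{(n-g)(d-g)}{g}$. Then $(n,d,a)$ is bad if and only if $g\nmid a$.
   Context: Let $R=\mathbb{C}[x_1,\dots,x_n]$ with $\mathfrak{S}_n$ permuting the variables and $R_a^{\mathfrak{S}_n}$ the symmetric polynomials homogeneous of degree $a$. A triple $(n,d,a)$ of positive integers is good if there exists $f\in R_a^{\mathfrak{S}_n}$ such that $x_1^d-x_n^d,\dots,x_{n-1}^d-x_n^d,f$ is a regular sequence (equivalently, $f$ has no zero on $\mathcal{V}_d=\{(z_1,\dots,z_n)\in\mathbb{C}^n: z_i^d=1\ \forall i,\ z_n=1\}$); otherwise it is bad. *)

From mathcomp Require Import all_boot all_algebra.
From mathcomp Require Import Rstruct.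
From mathcomp Require Import complex.
From mathcomp Require Import mpoly.
From Stdlib Require Import Reals.

Set Implicit Arguments. Unset Strict Implicit. Unset Printing Implicit Defensive.
Import GRing.Theory Num.Theory.
Local Open Scope ring_scope.

Definition CC : numClosedFieldType := complex Rdefinitions.R.

(* V_d = { z in C^n : z_i^d = 1 for all i, z_n = 1 }, with variables
   indexed by 'I_n (0-based), so z_n is the coordinate of index n-1. *)
Definition in_Vd (n d : nat) (z : 'I_n -> CC) : Prop :=
  (forall i : 'I_n, z i ^+ d = 1) /\
  (forall i : 'I_n, nat_of_ord i = n.-1 -> z i = 1).

Definition good (n d k : nat) : Prop :=
  exists f : {mpoly CC[n]},
    [/\ f \is symmetric, f \is k.-homog &
        forall z : 'I_n -> CC, in_Vd d z -> f.@[z] != 0].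

Definition bad (n d a : nat) : Prop := ~ good n d a.

From mathcomp Require Import all_boot all_algebra.
From mathcomp Require Import perm cyclic separable cyclotomic mpoly zify.

(* If g = gcd(d, n) does not divide a, let w be a primitive g-th root of unity.
   The point z = (w, w^2, ..., w^n) lies on V_d, and a cyclic shift of its
   coordinates multiplies it by w; a symmetric form f of degree a therefore
   satisfies f(z) = w^a f(z), so f(z) = 0.  Conversely e_n = x_1 ... x_n and
   p_d = x_1^d + ... + x_n^d have no zero on V_d (p_d = n there), so every
   degree x n + y d is good, and when g | a the bound on a makes a/g such a
   combination of n/g and d/g by Sylvester's solution of the Frobenius coin
   problem. *)

Set Implicit Arguments.
Unset Strict Implicit.
Unset Printing Implicit Defensive.

Import GRing.Theory Num.Theory.

Lemma coprime_frobenius p q t : 0 < p -> 0 < q -> coprime p q ->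
  (p - 1) * (q - 1) <= t -> exists x y, t = x * p + y * q.
Proof.
move=> p_gt0 q_gt0 co_pq le_t.
have [x x_lt_q xp_eq_t] : exists2 x, x < q & x * p = t %[mod q].
  pose k := chinese p q 0 t.
  have k_eq : k = k %/ p * p.
    by rewrite {1}(divn_eq k p) /k (chinese_modl co_pq) mod0n addn0.
  exists ((k %/ p) %% q); first by rewrite ltn_mod.
  by rewrite modnMml -k_eq (chinese_modr co_pq).
have xp_le : x * p <= (q - 1) * p by rewrite leq_mul2r; lia.
case: (leqP (x * p) t) => [xp_le_t | t_lt_xp].
  have /dvdnP [y ey] : q %| t - x * p by rewrite -eqn_mod_dvd // xp_eq_t.
  by exists x, y; rewrite -ey subnKC.
(* x p - t would be a positive multiple of q below (q-1) p - (p-1)(q-1) < q. *)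
have : q %| x * p - t by rewrite -eqn_mod_dvd ?xp_eq_t // ltnW.
move/(dvdn_leq _); rewrite subn_gt0 => /(_ t_lt_xp); nia.
Qed.

Lemma gcdn_frobenius p q t : 0 < p -> 0 < q -> gcdn p q %| t ->
  (p - gcdn p q) * (q - gcdn p q) <= t * gcdn p q ->
  exists x y, t = x * p + y * q.
Proof.
set g := gcdn p q => p_gt0 q_gt0 /dvdnP [t' ->] le_t.
have g_gt0 : 0 < g by rewrite gcdn_gt0 p_gt0.
have /dvdnP [p' p_eq] : g %| p by apply: dvdn_gcdl.
have /dvdnP [q' q_eq] : g %| q by apply: dvdn_gcdr.
have co_pq' : coprime p' q'.
  by rewrite /coprime -(eqn_pmul2r g_gt0) muln_gcdl -p_eq -q_eq mul1n.
have p'_gt0 : 0 < p' by move: p_gt0; rewrite p_eq muln_gt0 => /andP [].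
have q'_gt0 : 0 < q' by move: q_gt0; rewrite q_eq muln_gt0 => /andP [].
have le_t' : (p' - 1) * (q' - 1) <= t'.
  rewrite -(@leq_pmul2r (g * g)) ?muln_gt0 ?g_gt0 //.
  have -> : (p' - 1) * (q' - 1) * (g * g) = (p - g) * (q - g).
    by rewrite mulnACA p_eq q_eq !mulnBl mul1n.
  by rewrite mulnA.
have [x [y ->]] := coprime_frobenius p'_gt0 q'_gt0 co_pq' le_t'.
by exists x, y; rewrite p_eq q_eq; lia.
Qed.

Local Open Scope ring_scope.

Section MevalSymHomog.

Variables (R : comNzRingType) (n : nat).
Implicit Types (p : {mpoly R[n]}) (v : 'I_n -> R).

Lemma meval_msym (s : 'S_n) p v : (msym s p).@[v] = p.@[fun i => v (s i)].
Proof.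
rewrite [p in LHS]mpolyE [p in RHS]mpolyE.
rewrite (big_morph _ (@msymD _ _ s) (@msym0 _ _ s)).
rewrite !(big_morph _ (mevalD _) (meval0 _)).
apply: eq_bigr => m _; rewrite msymZ !mevalZ msymX !mevalX; congr (_ * _).
rewrite (reindex_inj (@perm_inj _ s)) /=; apply: eq_bigr => i _.
by rewrite mnmE permK.
Qed.

Lemma meval_dhomog_scale k p v (w : R) : p \is k.-homog ->
  p.@[fun i => w * v i] = w ^+ k * p.@[v].
Proof.
move=> p_homog; rewrite !mevalE mulr_sumr; apply: eq_big_seq => m m_supp.
under eq_bigr do rewrite exprMn.
by rewrite big_split /= prodrXr -mdegE (dhomog_mf p_homog m_supp) mulrCA.
Qed.

End MevalSymHomog.

Lemma meval_sym_dhomog_cyclic_eq0 (R : idomainType) n k (w : R)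
    (p : {mpoly R[n]}) :
  p \is symmetric -> p \is k.-homog -> w ^+ n = 1 -> w ^+ k != 1 ->
  p.@[fun i : 'I_n => w ^+ i.+1] = 0.
Proof.
move=> p_sym p_homog wn1 wk_neq1; set z := fun i : 'I_n => w ^+ i.+1.
pose s : 'S_n := perm (@ordS_inj n).
have z_shift : (fun i => z (s i)) =1 (fun i => w * z i).
  by move=> i; rewrite permE /z /= exprS (expr_mod _ wn1).
have := meval_msym s p z; rewrite (issymP _ p_sym) (meval_eq _ z_shift).
rewrite (meval_dhomog_scale _ _ p_homog) -{1}[p.@[z]]mul1r => /eqP.
by rewrite -subr_eq0 -mulrBl mulf_eq0 subr_eq0 eq_sym (negbTE wk_neq1) => /eqP.
Qed.

Lemma closed_field_prim_root (F : closedFieldType) m :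
  (0 < m)%N -> m%:R != 0 :> F -> {z : F | m.-primitive_root z}.
Proof.
move=> m_gt0 m_neq0.
have [r Dp] := closed_field_poly_normal ('X^m - 1 : {poly F}).
apply/sigW; rewrite (monicP _) ?monicXnsubC // scale1r in Dp.
have r_unity : all m.-unity_root r.
  by apply/allP => z; rewrite -root_prod_XsubC -Dp.
have r_size : (m <= size r)%N.
  by rewrite -ltnS -(size_prod_XsubC r id) -Dp size_XnsubC.
have r_uniq : uniq r by rewrite -separable_prod_XsubC -Dp separable_Xn_sub_1.
have /hasP [z _ z_prim] := has_prim_root m_gt0 r_unity r_uniq r_size.
by exists z.
Qed.

Lemma bad_of_not_dvdn n d a : (0 < n)%N -> ~~ (gcdn d n %| a)%N -> bad n d a.
Proof.
move=> n_gt0 g_ndvd_a [f [f_sym f_homog f_nz]]; set g := gcdn d n in g_ndvd_a.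
have g_gt0 : (0 < g)%N by rewrite gcdn_gt0 n_gt0 orbT.
have g_neq0 : g%:R != 0 :> CC by rewrite pnatr_eq0 -lt0n.
have [w w_prim] := closed_field_prim_root g_gt0 g_neq0.
have w_unity m : (g %| m)%N -> w ^+ m = 1.
  by move=> g_dvd_m; apply/eqP; rewrite -(prim_order_dvd w_prim).
have z_Vd : in_Vd d (fun i : 'I_n => w ^+ i.+1).
  split=> i; first by rewrite -exprM w_unity ?dvdn_mull ?dvdn_gcdl.
  by move=> ->; rewrite prednK // w_unity ?dvdn_gcdr.
apply/negP: (f_nz _ z_Vd).
rewrite (meval_sym_dhomog_cyclic_eq0 f_sym f_homog) ?eqxx //.
  exact: w_unity (dvdn_gcdr d n).
by rewrite -(prim_order_dvd w_prim).
Qed.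

Lemma good_add n d k l : good n d k -> good n d l -> good n d (k + l)%N.
Proof.
move=> [f [f_sym f_homog f_nz]] [h [h_sym h_homog h_nz]].
exists (f * h); split; [exact: rpredM | exact: dhomogM |].
by move=> z z_Vd; rewrite mevalM mulf_neq0 ?f_nz ?h_nz.
Qed.

Lemma good_muln n d k m : good n d k -> good n d (k * m)%N.
Proof.
move=> [f [f_sym f_homog f_nz]].
exists (f ^+ m); split; [exact: rpredX | exact: dhomogMn |].
by move=> z z_Vd; rewrite rmorphXn expf_neq0 ?f_nz.
Qed.

Definition power_sum (R : nzRingType) n d : {mpoly R[n]} :=
  \sum_(i < n) 'X_i ^+ d.

Lemma power_sum_sym (R : nzRingType) n d : power_sum R n d \is symmetric.
Proof.
apply/issymP => s.
rewrite /power_sum (big_morph _ (@msymD _ _ s) (@msym0 _ _ s)).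
rewrite (reindex_inj (@perm_inj _ s^-1)) /=; apply: eq_bigr => i _.
rewrite rmorphXn /= msymX; congr (_ ^+ _); congr 'X_[_].
by apply/mnmP => j; rewrite !mnmE (inj_eq (@perm_inj _ _)).
Qed.

Lemma dhomog_power_sum (R : nzRingType) n d : power_sum R n d \is d.-homog.
Proof.
apply: rpred_sum => i _.
have X_homog : ('X_i : {mpoly R[n]}) \is 1.-homog by rewrite dhomogX /= mdeg1.
by have := dhomogMn d X_homog; rewrite mul1n.
Qed.

Lemma good_power_sum n d : (0 < n)%N -> good n d d.
Proof.
move=> n_gt0; exists (power_sum CC n d).
split; [exact: power_sum_sym | exact: dhomog_power_sum |].
move=> z [z_unity _]; rewrite rmorph_sum.
rewrite (eq_bigr (fun=> 1)) => [|i _]; last first.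
  by rewrite rmorphXn /= mevalXU z_unity.
by rewrite sumr_const card_ord pnatr_eq0 -lt0n.
Qed.

Lemma good_mesym n d : (0 < d)%N -> good n d n.
Proof.
move=> d_gt0; exists (mesym n CC n).
split; [exact: mesym_sym | exact: dhomog_mesym |].
move=> z [z_unity _]; rewrite mesymnnE rmorph_prod /=; apply/prodf_neq0 => i _.
rewrite mevalXU; apply: contra_eq_neq (z_unity i) => ->.
by rewrite expr0n gtn_eqF // eq_sym oner_neq0.
Qed.

Lemma good_nat_combination n d x y : (0 < n)%N -> (0 < d)%N ->
  good n d (x * n + y * d)%N.
Proof.
move=> n_gt0 d_gt0; rewrite mulnC [(y * d)%N]mulnC.
apply: good_add; apply: good_muln.
  exact: good_mesym.
exact: good_power_sum.
Qed.

Theorem proposition3p16 (n d a : nat) :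
  (0 < n)%N -> (0 < d)%N -> (0 < a)%N ->
  let g := gcdn d n in
  ((n - g) * (d - g) <= a * g)%N ->
  (bad n d a <-> ~~ (g %| a)%N).
Proof.
move=> n_gt0 d_gt0 _ g a_large; split; last exact: bad_of_not_dvdn.
apply: contraPN => g_dvd_a; apply.
rewrite /g gcdnC in g_dvd_a a_large.
have [x [y ->]] := gcdn_frobenius n_gt0 d_gt0 g_dvd_a a_large.
exact: good_nat_combination.
Qed.
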